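(* Let $\Lambda$ be a finite-dimensional algebra over a field $k$. Then: (1) $K({\bf T}(\Lambda))=K(\Lambda) \ltimes [\Lambda,\Lambda^*]$, i.e. $K({\bf T}(\Lambda))=\{(a,\varphi): a\in K(\Lambda),\ \varphi\in[\Lambda,\Lambda^*]\}$. (2) Assume moreover that $\Lambda$ is symmetric with symmetrizing (associative, symmetric, nondegenerate bilinear) form $\langle-,-\rangle$. Then (a) $[\Lambda,\Lambda^*]$ is spanned by the linear maps $\varphi_{[a,b]}:=\langle -,ab-ba\rangle$, $a,b\in\Lambda$; (b) $[\Lambda,\Lambda^*] = \operatorname{Ann}_{\Lambda^*}(Z(\Lambda))$.
   Context: $\Lambda^*=\operatorname{Hom}_k(\Lambda,k)$ is a $\Lambda$-$\Lambda$-bimodule via $(a\varphi)(b)=\varphi(ba)$, $(\varphi a)(b)=\varphi(ab)$. The trivial extension ${\bf T}(\Lambda)$ is $\Lambda\oplus\Lambda^*$ with multiplication $(a,\varphi)(b,\psi)=(ab,a\psi+\varphi b)$. For an algebra $A$, $K(A)$ is the $k$-span of all commutators $xy-yx$. $[\Lambda,\Lambda^*]$ is the $k$-span of all $a\varphi-\varphi a$ with $a\in\Lambda$, $\varphi\in\Lambda^*$. $Z(\Lambda)$ is the center, and $\operatorname{Ann}_{\Lambda^*}(V)=\{\varphi\in\Lambda^*:\varphi(V)=0\}$ for $V\subseteq\Lambda$. *)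

From HB Require Import structures.
From mathcomp Require Import all_boot all_order all_algebra all_field.
Set Implicit Arguments. Unset Strict Implicit. Unset Printing Implicit Defensive.
Import GRing.Theory.
Local Open Scope ring_scope.

Definition in_span (F : nzRingType) (V : lmodType F) (S : V -> Prop) (v : V) : Prop :=
  exists n (c : 'I_n -> F) (s : 'I_n -> V),
    (forall i, S (s i)) /\ v = \sum_(i < n) c i *: s i.

Definition commK (F : nzRingType) (V : lmodType F) (mul : V -> V -> V) (v : V) : Prop :=
  in_span (fun w => exists x y, w = mul x y - mul y x) v.

Section TrivExt.
Variables (k : fieldType) (L : falgType k).

Definition dual := 'Hom(L, k^o).

Definition lact (a : L) (phi : dual) : dual := linfun (fun b : L => phi (b * a)).
Definition ract (phi : dual) (a : L) : dual := linfun (fun b : L => phi (a * b)).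

Definition TE := (L * dual)%type.
Definition tmul (x y : TE) : TE :=
  (x.1 * y.1, lact x.1 y.2 + ract x.2 y.1).

Definition KL (a : L) : Prop := commK (fun x y : L => x * y) a.
Definition KT (x : TE) : Prop := commK tmul x.
Definition brLD (phi : dual) : Prop :=
  in_span (fun psi => exists (a : L) (f : dual), psi = lact a f - ract f a) phi.

Definition in_center (z : L) : Prop := forall y : L, z * y = y * z.

Definition symmetrizing_form (B : L -> L -> k) : Prop :=
  [/\ (forall (c : k) x y z, B (c *: x + y) z = c * B x z + B y z),
      (forall (c : k) x y z, B x (c *: y + z) = c * B x y + B x z),
      (forall x y z, B (x * y) z = B x (y * z)),
      (forall x y, B x y = B y x) &
      (forall x, (forall y, B x y = 0) -> x = 0)].

Definition phi_comm (B : L -> L -> k) (a b : L) : dual :=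
  linfun (fun x : L => (B x (a * b - b * a) : k^o)).
End TrivExt.

From HB Require Import structures.
From mathcomp Require Import all_boot all_order all_algebra all_field.
Import GRing.Theory.
Local Open Scope ring_scope.
Set Implicit Arguments. Unset Strict Implicit.

(* In T(Λ) the commutator of (x, f) and (y, g) is ([x, y], (x g - g x) - (y f - f y)),
   while the pairs (x, 0), (0, f) already yield K(Λ) × 0 and 0 × [Λ, Λ^*]; this gives (1).
   A symmetrizing form B identifies Λ with Λ^* via c ↦ B(-, c) and turns
   a B(-, c) - B(-, c) a into B(-, ac - ca), so [Λ, Λ^*] is the image of K(Λ): (2a).
   Since B([x, y], z) = B(y, [z, x]), the B-orthogonal of K(Λ) is Z(Λ).  So if B(-, c)
   kills Z(Λ) but c ∉ K(Λ), a functional vanishing on K(Λ) but not at c is B(-, z) with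
   z central, and B(z, c) = B(c, z) ≠ 0; this gives (2b). *)

Section Span.
Variables (F : nzRingType) (V : lmodType F).
Implicit Types (S T : V -> Prop) (u v : V).

Lemma in_span0 S : in_span S 0.
Proof. by exists 0%N, (fun _ => 0), (fun _ => 0); split; [case | rewrite big_ord0]. Qed.

Lemma in_span_gen S v : S v -> in_span S v.
Proof.
by move=> Sv; exists 1%N, (fun _ => 1), (fun _ => v); rewrite big_ord1 scale1r.
Qed.

Lemma in_spanD S u v : in_span S u -> in_span S v -> in_span S (u + v).
Proof.
move=> [n [c [s [Ss ->]]]] [m [d [t [St ->]]]].
exists (n + m)%N, (fun i => match split i with inl j => c j | inr j => d j end),
  (fun i => match split i with inl j => s j | inr j => t j end); split.
  by move=> i; case: (split i).
by rewrite big_split_ord; congr (_ + _); apply: eq_bigr => i _;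
  rewrite ?(unsplitK (inl _)) ?(unsplitK (inr _)).
Qed.

Lemma in_spanZ S a v : in_span S v -> in_span S (a *: v).
Proof.
move=> [n [c [s [Ss ->]]]]; exists n, (fun i => a * c i), s; split=> //.
by rewrite scaler_sumr; apply: eq_bigr => i _; rewrite scalerA.
Qed.

Lemma in_spanB S u v : in_span S u -> in_span S v -> in_span S (u - v).
Proof. by move=> Su Sv; rewrite -scaleN1r; apply/in_spanD/in_spanZ. Qed.

Lemma in_span_ind S (P : V -> Prop) :
  P 0 -> (forall u v, P u -> P v -> P (u + v)) -> (forall a v, P v -> P (a *: v)) ->
  (forall v, S v -> P v) -> forall v, in_span S v -> P v.
Proof.
move=> P0 PD PZ PS _ [n [c [s [Ss ->]]]].
by apply: (big_ind P) => // i _; apply/PZ/PS.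
Qed.

Lemma in_span_sub S T v :
  (forall w, S w -> in_span T w) -> in_span S v -> in_span T v.
Proof.
by move=> ST; apply: (in_span_ind _ _ _ ST); [apply: in_span0 | apply: in_spanD | apply: in_spanZ].
Qed.

End Span.

Lemma in_span_linear (F : nzRingType) (V W : lmodType F) (f : V -> W)
    (S : V -> Prop) (T : W -> Prop) v :
  linear f -> (forall w, S w -> in_span T (f w)) -> in_span S v -> in_span T (f v).
Proof.
move=> lin_f ST.
pose g : {linear V -> W} := HB.pack f (GRing.isLinear.Build _ _ _ _ f lin_f).
have f0 : f 0 = 0 := linear0 g.
have fD u w : f (u + w) = f u + f w := linearD g u w.
have fZ a w : f (a *: w) = a *: f w := linearZ_LR g a w.
apply: (in_span_ind (P := fun v => in_span T (f v))) => //=.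
- by rewrite f0; apply: in_span0.
- by move=> u w Tu Tw; rewrite fD; apply: in_spanD.
- by move=> a w Tw; rewrite fZ; apply: in_spanZ.
Qed.

Lemma linfun_linearE (F : fieldType) (U V : vectType F) (f : U -> V) :
  linear f -> linfun f =1 f.
Proof.
by move=> lin_f; apply: (lfunE (HB.pack f (GRing.isLinear.Build _ _ _ _ f lin_f))).
Qed.

Lemma lker0_limg_full (F : fieldType) (U V : vectType F) (f : 'Hom(U, V)) :
  dim U = dim V -> lker f == 0%VS -> limg f = fullv.
Proof.
move=> dimUV kf0; apply/eqP.
by rewrite eqEdim subvf limg_dim_eq ?(eqP kf0) ?capv0 // !dimvf dimUV /=.
Qed.

Lemma memv_separate (F : fieldType) (V : vectType F) (U : {vspace V}) v :
  v \notin U -> exists f : 'Hom(V, F^o), (forall u, u \in U -> f u = 0) /\ f v != 0.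
Proof.
move=> vNU; set w := v - projv U v.
have w_neq0 : w != 0.
  by apply: contra vNU; rewrite subr_eq0 => /eqP ->; apply: memv_proj.
have /existsP [i wi] : [exists i, coord (vbasis fullv) i w != 0].
  apply: contraR w_neq0 => /existsPn w0.
  by rewrite (coord_vbasis (memvf w)) big1 // => i _; rewrite (eqP (negbNE (w0 i))) scale0r.
exists (linfun (coord (vbasis fullv) i : V -> F^o) \o (\1 - projv U))%VF; split.
  by move=> u Uu; rewrite comp_lfunE add_lfunE opp_lfunE id_lfunE projv_id // subrr linear0.
by rewrite comp_lfunE add_lfunE opp_lfunE id_lfunE lfunE.
Qed.

Lemma in_span_memv_span (F : fieldType) (V : vectType F) (S : V -> Prop) (s : seq V) v :
  (forall x, x \in s -> S x) -> v \in <<s>>%VS -> in_span S v.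
Proof.
move=> sS /(@coord_span _ _ _ (in_tuple s)) ->.
exists (size s), (fun i => coord (in_tuple s) i v), (fun i => s`_i).
by split=> // i; apply/sS/mem_nth.
Qed.

Section Commutators.
Variables (k : fieldType) (L : falgType k).

Definition commv : {vspace L} :=
  <<[seq x * y - y * x | x <- vbasis {:L}, y <- vbasis {:L}]>>%VS.

Lemma commr_expandl x y : x * y - y * x =
  \sum_i coord (vbasis {:L}) i x *: ((vbasis {:L})`_i * y - y * (vbasis {:L})`_i).
Proof.
rewrite {1 2}(coord_vbasis (memvf x)) mulr_suml mulr_sumr -sumrB.
by apply: eq_bigr => i _; rewrite -scalerAl -scalerAr scalerBr.
Qed.

Lemma memv_commv x y : x * y - y * x \in commv.
Proof.
have vbasis_mem (i : 'I_(\dim {:L})) : (vbasis {:L})`_i \in (vbasis {:L} : seq L).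
  by apply/mem_nth; rewrite size_tuple.
rewrite commr_expandl; apply: rpred_sum => i _; apply: rpredZ.
rewrite -opprB commr_expandl rpredN; apply: rpred_sum => j _; apply: rpredZ.
apply/memv_span/allpairsP.
by exists ((vbasis {:L})`_j, (vbasis {:L})`_i); rewrite /= !vbasis_mem.
Qed.

Lemma commv_KL c : c \in commv -> KL c.
Proof. by apply: in_span_memv_span => _ /allpairsP [[x y] [_ _ ->]]; exists x, y. Qed.

End Commutators.

Section TrivialExtension.
Variables (k : fieldType) (L : falgType k).
Implicit Types (a x : L) (phi : dual L) (u v : TE L).

Lemma lactE a phi x : lact a phi x = phi (x * a).
Proof. by rewrite linfun_linearE // => c y z; rewrite mulrDl -scalerAl linearP. Qed.

Lemma ractE a phi x : ract phi a x = phi (a * x).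
Proof. by rewrite linfun_linearE // => c y z; rewrite mulrDr -scalerAr linearP. Qed.

Lemma lact0 a : lact a 0 = 0.
Proof. by apply/lfunP => x; rewrite lactE !zero_lfunE. Qed.

Lemma ract0 a : ract 0 a = 0.
Proof. by apply/lfunP => x; rewrite ractE !zero_lfunE. Qed.

Lemma tmul_commE u v : tmul u v - tmul v u =
  (u.1 * v.1 - v.1 * u.1, (lact u.1 v.2 - ract v.2 u.1) - (lact v.1 u.2 - ract u.2 v.1)).
Proof. by congr pair; rewrite /= opprD opprB [RHS]addrACA [- ract _ _ + _]addrC. Qed.

Lemma KT_fst u : KT u -> KL u.1.
Proof.
apply: in_span_linear => // _ [v [w ->]].
by apply: in_span_gen; exists v.1, w.1; rewrite tmul_commE.
Qed.

Lemma KT_snd u : KT u -> brLD u.2.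
Proof.
apply: in_span_linear => // _ [v [w ->]].
by rewrite tmul_commE; apply: in_spanB; apply: in_span_gen; do 2!eexists.
Qed.

Lemma KL_KT a : KL a -> KT (a, 0).
Proof.
apply: (in_span_linear (f := fun a => (a, 0) : TE L)).
  by move=> c x y; congr pair; rewrite /= scaler0 addr0.
move=> _ [x [y ->]]; apply: in_span_gen; exists (x, 0), (y, 0).
by rewrite tmul_commE /= !lact0 !ract0 subrr.
Qed.

Lemma brLD_KT phi : brLD phi -> KT (0, phi).
Proof.
apply: (in_span_linear (f := fun phi => (0, phi) : TE L)).
  by move=> c x y; congr pair; rewrite /= scaler0 addr0.
move=> _ [x [f ->]]; apply: in_span_gen; exists (x, 0), (0, f).
by rewrite tmul_commE /= mulr0 mul0r subrr lact0 ract0 !subr0.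
Qed.

Lemma KT_pairP a phi : KT (a, phi) <-> KL a /\ brLD phi.
Proof.
split=> [Kaphi | [Ka Bphi]].
  by split; [apply: (KT_fst Kaphi) | apply: (KT_snd Kaphi)].
have -> : (a, phi) = (a, 0) + (0, phi) :> TE L by congr pair; rewrite /= ?addr0 ?add0r.
by apply: in_spanD; [apply: KL_KT | apply: brLD_KT].
Qed.

Lemma brLD_center_ann phi :
  brLD phi -> forall z, in_center z -> phi z = 0.
Proof.
move=> Bphi z Zz; apply: (in_span_ind (P := fun psi : dual L => psi z = 0) _ _ _ _ Bphi).
- by rewrite zero_lfunE.
- by move=> f g fz gz; rewrite add_lfunE fz gz addr0.
- by move=> c f fz; rewrite scale_lfunE fz scaler0.
by move=> _ [a [f ->]]; rewrite add_lfunE opp_lfunE lactE ractE (Zz a) subrr.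
Qed.

End TrivialExtension.

Section SymmetrizingForm.
Variables (k : fieldType) (L : falgType k) (B : L -> L -> k).
Hypothesis symB : symmetrizing_form B.
Implicit Types (a c x y z : L) (phi : dual L).

Definition form_dual c : dual L := linfun (fun x : L => (B x c : k^o)).

Lemma form_dualE c x : form_dual c x = B x c.
Proof. by case: symB => linB _ _ _ _; rewrite linfun_linearE // => t u v; rewrite linB. Qed.

Lemma formBl x y z : B (x - y) z = B x z - B y z.
Proof. by rewrite -!form_dualE linearB. Qed.

Lemma form_dual_linear : linear form_dual.
Proof.
case: symB => linB _ _ symmB _ t u v; apply/lfunP => x.
by rewrite add_lfunE scale_lfunE !form_dualE symmB linB !(symmB x).
Qed.

Lemma form_dual_inj : injective form_dual.
Proof.
case: symB => _ _ _ symmB nondegB u v /lfunP uv.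
apply/eqP; rewrite -subr_eq0; apply/eqP.
by apply: nondegB => x; rewrite formBl !(symmB _ x) -!form_dualE uv subrr.
Qed.

Lemma form_dual_surj phi : exists c, phi = form_dual c.
Proof.
pose G := linfun form_dual.
have GE : G =1 form_dual by apply: linfun_linearE form_dual_linear.
have dim_dual : dim (dual L) = dim L by exact: muln1.
have G_onto : limg G = fullv.
  apply: lker0_limg_full; first by rewrite dim_dual.
  by apply/lker0P => u v; rewrite !GE => /form_dual_inj.
have : phi \in limg G by rewrite G_onto memvf.
by case/memv_imgP => c _ ->; exists c.
Qed.

Lemma lact_form_dual a c :
  lact a (form_dual c) - ract (form_dual c) a = form_dual (a * c - c * a).
Proof.
case: symB => _ _ assocB symmB _; apply/lfunP => x.
rewrite add_lfunE opp_lfunE lactE ractE !form_dualE [RHS]symmB formBl.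
by congr (_ - _); [rewrite assocB symmB | rewrite symmB -assocB].
Qed.

Lemma form_commr_swap x y z : B (z * x - x * z) y = B (x * y - y * x) z.
Proof.
case: symB => _ _ assocB symmB _.
rewrite !formBl; congr (_ - _); first by rewrite assocB symmB.
by rewrite assocB symmB assocB symmB.
Qed.

Lemma orth_commr_center z : (forall x y, B (x * y - y * x) z = 0) -> in_center z.
Proof.
case: symB => _ _ _ _ nondegB orth_z x; apply/eqP; rewrite -subr_eq0; apply/eqP.
by apply: nondegB => y; rewrite form_commr_swap.
Qed.

Lemma center_ann_memv_commv c : (forall z, in_center z -> B z c = 0) -> c \in commv L.
Proof.
move=> ann_c; apply/idPn => /memv_separate [f [f_commv fc]].
have [z f_z] := form_dual_surj f.
have z_center : in_center z.
  by apply: orth_commr_center => x y; rewrite -form_dualE -f_z f_commv ?memv_commv.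
case: symB => _ _ _ symmB _.
by move: fc; rewrite f_z form_dualE symmB ann_c ?eqxx.
Qed.

Lemma brLD_span_phi_comm phi :
  brLD phi <-> in_span (fun psi => exists a b, psi = phi_comm B a b) phi.
Proof.
split; apply: in_span_sub => _ [a [f ->]]; apply: in_span_gen.
  by have [c ->] := form_dual_surj f; exists a, c; rewrite lact_form_dual.
by exists a, (form_dual f); rewrite lact_form_dual.
Qed.

Lemma center_ann_brLD phi : (forall z, in_center z -> phi z = 0) -> brLD phi.
Proof.
have [c ->] := form_dual_surj phi => ann_c; apply/brLD_span_phi_comm.
have /commv_KL Kc : c \in commv L.
  by apply: center_ann_memv_commv => z /ann_c; rewrite form_dualE.
apply: (in_span_linear form_dual_linear _ Kc) => _ [x [y ->]].
by apply: in_span_gen; exists x, y.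
Qed.

End SymmetrizingForm.

Theorem lemma3p4 (k : fieldType) (L : falgType k) :
  (forall (a : L) (phi : dual L), KT (a, phi) <-> KL a /\ brLD phi) /\
  (forall B : L -> L -> k, symmetrizing_form B ->
     (forall phi : dual L,
        brLD phi <-> in_span (fun psi => exists a b : L, psi = phi_comm B a b) phi) /\
     (forall phi : dual L,
        brLD phi <-> (forall z : L, in_center z -> phi z = 0))).
Proof.
split=> [a phi | B symB]; first exact: KT_pairP.
split=> phi; first exact: brLD_span_phi_comm symB phi.
split; [exact: brLD_center_ann | exact: center_ann_brLD symB phi].
Qed.
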